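(* Let $G$ be a finite simple graph with edge weight function $w$ and vertex weight function $w_1$. Then all roots of $\eta_{(w,w_1)}(G,x)$ are real.
   Context: An edge weight function $w$ assigns a nonzero complex number to each edge; a vertex weight function $w_1$ assigns a real number (possibly $0$) to each vertex; induced subgraphs carry restricted weights. For $A\subseteq E(G)$, $w(A)=\prod_{e\in A}w(e)$. $\mu_w(G,x)=\sum_{M}(-1)^{|M|}|w(M)|^2x^{n-2|M|}$ over all matchings $M$ of $G$ (including empty), $n=|V(G)|$. $\eta_{(w,w_1)}(G,x)=\sum_{S\subseteq V(G)}(-1)^{|V(G)\setminus S|}\big(\prod_{v\in V(G)\setminus S}w_1(v)\big)\mu_w(G[S],x)$ with $G[S]$ the induced subgraph and $\mu_w$ of the empty graph equal to $1$. *)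

From HB Require Import structures.
From mathcomp Require Import all_boot all_order all_algebra.
Set Implicit Arguments. Unset Strict Implicit. Unset Printing Implicit Defensive.
Import Order.TTheory GRing.Theory Num.Theory.
Local Open Scope ring_scope.

Section Eta.
Variables (C : numClosedFieldType) (T : finType).

Definition edges (e : rel T) : {set {set T}} :=
  [set A : {set T} | [exists x, exists y, e x y && (A == [set x; y])]].

Definition is_matching (e : rel T) (S : {set T}) (M : {set {set T}}) : bool :=
  [&& M \subset edges e, trivIset M & cover M \subset S].

Definition mu_w (e : rel T) (w : {set T} -> C) (S : {set T}) : {poly C} :=
  \sum_(M : {set {set T}} | is_matching e S M)
    ((-1) ^+ #|M| * \prod_(A in M) `|w A| ^+ 2)%:P * 'X^(#|S| - 2 * #|M|).

Definition eta_w (e : rel T) (w : {set T} -> C) (w1 : T -> C) : {poly C} :=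
  \sum_(S : {set T})
    ((-1) ^+ #|~: S| * \prod_(v in ~: S) w1 v)%:P * mu_w e w S.

End Eta.

(* Expanding the product over unmatched vertices, eta(G, x) is the matching
   polynomial of G in which a vertex v missed by the matching contributes
   x - w1(v) instead of x.  Deleting a vertex u gives the Heilmann-Lieb recursion
     mu(S) = (x - w1 u) mu(S - u) - sum_(v ~ u) |w(uv)|^2 mu(S - u - v).
   For Im x > 0 it shows, by induction on |S|, that every ratio mu(S)/mu(S - u)
   has positive imaginary part: the real shift w1 u does not change Im x, and
   each subtracted term |w(uv)|^2 / (mu(S - u)/mu(S - u - v)) has nonpositive
   imaginary part.  So mu(G) has no zero in the upper half-plane, and none in
   the lower one by conjugation. *)

From HB Require Import structures.
From mathcomp Require Import all_boot all_order all_algebra.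
Set Implicit Arguments. Unset Strict Implicit. Unset Printing Implicit Defensive.
Import Order.TTheory GRing.Theory Num.Theory.
Local Open Scope ring_scope.

Lemma prod_subr_setC (R : comPzRingType) (T : finType) (c : T -> R)
    (K : {set T}) (x : R) :
  \prod_(v in ~: K) (x - c v) =
  \sum_(S : {set T} | K \subset S)
     ((-1) ^+ #|~: S| * \prod_(v in ~: S) c v) * x ^+ (#|S| - #|K|).
Proof.
pose a v := if v \in K then 1 else x.
pose b v := if v \in K then 0 else - c v.
have -> : \prod_(v in ~: K) (x - c v) = \prod_v (a v + b v).
  symmetry; rewrite (bigID (mem K)) /= big1 ?mul1r => [|v vK]; last first.
    by rewrite /a /b vK addr0.
  by apply: eq_big => [v|v /negbTE vK]; rewrite ?inE // /a /b vK.
rewrite bigA_distr (bigID (fun J : {set T} => K \subset J)) /=.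
rewrite [X in _ + X]big1 ?addr0 => [|J /subsetPn [v vK vJ]]; last first.
  by rewrite (bigD1 v) //= (negbTE vJ) /b vK mul0r.
apply: eq_bigr => J sKJ; rewrite (bigID (mem J)) /= mulrC; congr (_ * _).
  rewrite -prodrN; apply: eq_big => [v|v /negbTE vJ]; first by rewrite inE.
  rewrite vJ /b; case: ifP => // vK.
  by have := subsetP sKJ v vK; rewrite vJ.
rewrite (eq_bigr a) => [|v /= -> //].
rewrite (bigID (mem K)) /= big1 ?mul1r => [|v /andP[_ vK]]; last by rewrite /a vK.
rewrite (eq_bigr (fun _ => x)) => [|v /andP[_ /negbTE vK]]; last by rewrite /a vK.
rewrite prodr_const -{2}(setIidPr sKJ) -cardsD; congr (x ^+ _).
by apply: eq_card => v; rewrite !inE andbC.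
Qed.

Lemma Im_subr_sum_div_gt0 (C : numClosedFieldType) (I : finType) (P : pred I)
    (c q : I -> C) (x a : C) :
  0 < 'Im x -> a \is Num.real -> (forall i, P i -> 0 <= c i) ->
  (forall i, P i -> 0 < 'Im (q i)) ->
  0 < 'Im (x - a - \sum_(i | P i) c i / q i).
Proof.
move=> Imx_gt0 a_real c_ge0 Imq_gt0.
rewrite !raddfB /= (Creal_ImP _ a_real) subr0 raddf_sum /=.
apply: lt_le_trans Imx_gt0 _; rewrite -sumrN lerDl sumr_ge0 // => i Pi.
rewrite ImMl ?ger0_real ?c_ge0 // ImV mulNr mulrN opprK.
by rewrite mulr_ge0 ?divr_ge0 ?exprn_ge0 ?normr_ge0 ?c_ge0 ?ltW ?Imq_gt0.
Qed.

Section Matchings.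
Variables (C : numClosedFieldType) (T : finType) (e : rel T).
Hypotheses (e_sym : symmetric e) (e_irr : irreflexive e).

Lemma edgesP A : reflect (exists x y, e x y /\ A = [set x; y]) (A \in edges e).
Proof.
rewrite inE; apply: (iffP existsP) => [[x /existsP[y /andP[exy /eqP->]]] | ].
  by exists x, y.
by case=> x [y [exy ->]]; exists x; apply/existsP; exists y; rewrite exy eqxx.
Qed.

Lemma card_edges A : A \in edges e -> #|A| = 2%N.
Proof.
case/edgesP=> x [y [exy ->]]; rewrite cards2.
by case: eqP => // xy; rewrite xy e_irr in exy.
Qed.

Lemma edges_set2 u v : [set u; v] \in edges e -> e u v.
Proof.
move=> uvE; have := card_edges uvE; rewrite cards2; case: eqP => // /eqP neq_uv _.
case/edgesP: uvE => a [b [eab /setP uvE]].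
have := uvE u; have := uvE v; rewrite !inE !eqxx orbT /= => /esym vab /esym uab.
move: neq_uv; case/orP: uab => /eqP->; case/orP: vab => /eqP-> //; rewrite ?eqxx //.
by rewrite e_sym.
Qed.

Lemma set0_notin_edges (M : {set {set T}}) : M \subset edges e -> set0 \notin M.
Proof. by move/subsetP=> sub; apply/negP=> /sub/card_edges; rewrite cards0. Qed.

Lemma is_matchingE (S : {set T}) (M : {set {set T}}) :
  is_matching e S M = is_matching e setT M && (cover M \subset S).
Proof. by rewrite /is_matching subsetT andbT andbA. Qed.

Lemma card_cover_matching (M : {set {set T}}) :
  M \subset edges e -> trivIset M -> #|cover M| = (2 * #|M|)%N.
Proof.
move=> /subsetP sub /eqP <-; rewrite mulnC -sum_nat_const.
by apply: eq_bigr => A /sub; apply: card_edges.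
Qed.

Lemma matching_edge_mem (S : {set T}) (M : {set {set T}}) u v :
  is_matching e S M -> [set u; v] \in M -> [&& u \in S, v \in S & e u v].
Proof.
case/and3P=> sub _ /subsetP cov uvM; rewrite edges_set2 ?(subsetP sub) // andbT.
by apply/andP; split; apply: cov; apply/bigcupP; exists [set u; v];
  rewrite // !inE eqxx ?orbT.
Qed.

Lemma card_matching_partners (M : {set {set T}}) u :
  M \subset edges e -> trivIset M -> #|[set v | [set u; v] \in M]| = (u \in cover M).
Proof.
move=> sub tr; case: (boolP (u \in cover M)) => [uM | /negP uM]; last first.
  apply/eqP; rewrite cards_eq0; apply/eqP/setP => v; rewrite !inE.
  by apply/negP => uvM; apply: uM; apply/bigcupP; exists [set u; v]; rewrite // !inE eqxx.
have [A AM uA] := bigcupP uM.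
have /edgesP[a [b [eab defA]]] := subsetP sub A AM.
have [y defAy] : exists y, A = [set u; y].
  by move: uA; rewrite defA !inE => /orP[]/eqP->; [exists b | exists a; rewrite setUC].
rewrite (_ : [set v | _] = [set y]) ?cards1 //; apply/setP => v; rewrite !inE.
apply/idP/eqP => [uvM | ->]; last by rewrite -defAy.
have uv2 := card_edges (subsetP sub _ uvM); rewrite cards2 in uv2.
have uvA : [set u; v] = A.
  apply/eqP; apply: contraT => neqA.
  have := disjointFr (trivIsetP tr _ _ uvM AM neqA) (x := u).
  by rewrite uA !inE eqxx => /(_ isT).
have /setP/(_ v) := uvA; rewrite defAy !inE eqxx orbT /=.
by case/esym/orP=> /eqP // vu; rewrite vu eqxx in uv2.
Qed.

Lemma sum_matching_cover (S : {set T}) u (F : {set {set T}} -> C) :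
  \sum_(M | is_matching e S M && (u \in cover M)) F M =
  \sum_(v in S | e u v) \sum_(M | is_matching e S M && ([set u; v] \in M)) F M.
Proof.
rewrite [RHS](exchange_big_dep (is_matching e S)) /= => [|v M _ /andP[] //].
rewrite big_mkcondr /=; apply: eq_bigr => M mM.
rewrite (eq_bigl (mem [set v | [set u; v] \in M])) => [|v]; last first.
  rewrite !inE mM /=; case uvM: ([set u; v] \in M); rewrite ?andbF //.
  by case/and3P: (matching_edge_mem mM uvM) => _ -> ->.
case/and3P: mM => sub tr _.
by rewrite sumr_const card_matching_partners //; case: (u \in cover M).
Qed.

Lemma is_matching_setD1 (S : {set T}) (M : {set {set T}}) u v :
  is_matching e S M -> [set u; v] \in M ->
  is_matching e (S :\ u :\ v) (M :\ [set u; v]).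
Proof.
case/and3P=> sub tr cov uvM; apply/and3P; split.
- exact: subset_trans (subD1set _ _) sub.
- exact: trivIsetS (subD1set _ _) tr.
rewrite coverD1 //; apply/subsetP => z; rewrite !inE negb_or => /andP[/andP[zu zv] zc].
by rewrite zu zv (subsetP cov).
Qed.

Lemma is_matching_setU1 (S : {set T}) (M : {set {set T}}) u v :
  u \in S -> v \in S -> e u v -> is_matching e (S :\ u :\ v) M ->
  is_matching e S ([set u; v] |: M) && ([set u; v] \notin M).
Proof.
move=> uS vS euv /and3P[sub tr /subsetP cov].
have uvE : [set u; v] \in edges e by apply/edgesP; exists u, v.
have uvM : [set u; v] \notin M.
  apply/negP => uvM; have /cov : u \in cover M.
    by apply/bigcupP; exists [set u; v]; rewrite // !inE eqxx.
  by rewrite !inE eqxx andbF.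
rewrite uvM andbT; apply/and3P; split.
- by rewrite subUset sub1set uvE sub.
- have dis B : B \in M -> [disjoint [set u; v] & B].
    move=> BM; rewrite -setI_eq0; apply/eqP/setP => z; rewrite !inE.
    case zB: (z \in B); rewrite ?andbF // andbT.
    have /cov : z \in cover M by apply/bigcupP; exists B.
    by rewrite !inE => /and3P[/negbTE-> /negbTE->].
  by case: (trivIsetU1 dis tr (set0_notin_edges sub)).
rewrite /cover big_setU1 //= subUset; apply/andP; split.
  by apply/subsetP => z; rewrite !inE => /orP[]/eqP->.
by apply/subsetP => z /cov; rewrite !inE => /and3P[_ _].
Qed.

Lemma sum_matching_edge (S : {set T}) u v (F : {set {set T}} -> C) :
  u \in S -> v \in S -> e u v ->
  \sum_(M | is_matching e S M && ([set u; v] \in M)) F M =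
  \sum_(M | is_matching e (S :\ u :\ v) M) F ([set u; v] |: M).
Proof.
move=> uS vS euv.
rewrite (reindex_onto (fun M => [set u; v] |: M) (fun M => M :\ [set u; v])) /=.
  apply: eq_bigl => M; rewrite setU11 andbT; apply/idP/idP.
    case/andP=> mM /eqP defM; rewrite -defM.
    by apply: is_matching_setD1 mM (setU11 _ _).
  by move=> /(is_matching_setU1 uS vS euv)/andP[-> uvM]; rewrite setU1K ?eqxx.
by move=> M /andP[_ uvM]; rewrite setD1K.
Qed.

Variables (w : {set T} -> C) (w1 : T -> C).

Definition mu_shift_term (S : {set T}) (M : {set {set T}}) (x : C) : C :=
  (-1) ^+ #|M| * \prod_(A in M) `|w A| ^+ 2 * \prod_(v in S :\: cover M) (x - w1 v).

Definition mu_shift (S : {set T}) (x : C) : C :=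
  \sum_(M | is_matching e S M) mu_shift_term S M x.

Lemma horner_eta_w x : (eta_w e w w1).[x] = mu_shift setT x.
Proof.
rewrite /eta_w horner_sum.
under eq_bigr do rewrite hornerCM /mu_w horner_sum big_distrr /=.
under eq_bigr => S _ do under eq_bigr do rewrite hornerCM hornerXn.
under eq_bigr => S _ do rewrite (eq_bigl _ _ (is_matchingE S)).
rewrite (exchange_big_dep (is_matching e setT)) /= => [|S M _ /andP[] //].
apply: eq_bigr => M mM.
have cardM : #|cover M| = (2 * #|M|)%N.
  by case/and3P: mM => sub tr _; apply: card_cover_matching.
rewrite /mu_shift_term setTD (prod_subr_setC w1) big_distrr /=.
by apply: eq_big => [S|S _]; rewrite ?mM // cardM mulrCA.
Qed.

Lemma mu_shift0 x : mu_shift set0 x = 1.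
Proof.
rewrite /mu_shift (big_pred1 set0) => [|M /=]; last first.
  apply/idP/eqP => [/and3P[/subsetP sub _ /subsetP cov] | ->]; last first.
    by rewrite /is_matching sub0set /trivIset /cover !big_set0 cards0 sub0set.
  apply/setP => A; rewrite inE; apply/negbTE/negP => AM.
  have /set0Pn[z zA] : A != set0 by rewrite -card_gt0 card_edges ?sub.
  by have := cov z (subsetP (bigcup_sup _ AM) z zA); rewrite inE.
by rewrite /mu_shift_term cards0 expr0 !big_set0 set0D big_set0 !mulr1.
Qed.

Lemma mu_shift_uncovered (S : {set T}) u x : u \in S ->
  \sum_(M | is_matching e S M && (u \notin cover M)) mu_shift_term S M x =
  (x - w1 u) * mu_shift (S :\ u) x.
Proof.
move=> uS; rewrite big_distrr /=; apply: eq_big => M.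
  by rewrite (is_matchingE S) (is_matchingE (S :\ u)) subsetD1 andbA.
move=> /andP[_ uM]; rewrite /mu_shift_term (bigD1 u) /=; last by rewrite inE uS uM.
rewrite (eq_bigl (mem (S :\ u :\: cover M))); first exact: mulrCA.
by move=> v; rewrite !inE; case: (v == u); case: (v \in S); case: (v \in cover M).
Qed.

Lemma mu_shift_term_setU1 (S : {set T}) (M : {set {set T}}) u v x :
  u \in S -> v \in S -> e u v -> is_matching e (S :\ u :\ v) M ->
  mu_shift_term S ([set u; v] |: M) x =
  - (`|w [set u; v]| ^+ 2 * mu_shift_term (S :\ u :\ v) M x).
Proof.
move=> uS vS euv mM; have /andP[_ uvM] := is_matching_setU1 uS vS euv mM.
rewrite /mu_shift_term.
have -> : S :\: cover ([set u; v] |: M) = S :\ u :\ v :\: cover M.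
  rewrite /cover big_setU1 //=; apply/setP => z; rewrite !inE.
  by case: (z == u); case: (z == v); case: (z \in S); case: (z \in \bigcup_(B in M) B).
rewrite cardsU1 uvM big_setU1 //= add1n exprS mulN1r !mulNr.
by rewrite mulrCA !mulrA.
Qed.

Lemma mu_shift_rec (S : {set T}) u x : u \in S ->
  mu_shift S x = (x - w1 u) * mu_shift (S :\ u) x
    - \sum_(v in S | e u v) `|w [set u; v]| ^+ 2 * mu_shift (S :\ u :\ v) x.
Proof.
move=> uS; rewrite /mu_shift (bigID (fun M => u \in cover M)) /= addrC.
rewrite mu_shift_uncovered // sum_matching_cover -sumrN; congr (_ + _).
apply: eq_bigr => v /andP[vS euv]; rewrite sum_matching_edge // big_distrr -sumrN.
by apply: eq_bigr => M mM; rewrite mu_shift_term_setU1.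
Qed.

Hypothesis w1_real : forall v, w1 v \is Num.real.

Lemma mu_shift_conj (S : {set T}) x : mu_shift S x^* = (mu_shift S x)^*.
Proof.
rewrite /mu_shift rmorph_sum; apply: eq_bigr => M _.
rewrite /mu_shift_term !rmorphM rmorphXn rmorphN1 !rmorph_prod; congr (_ * _ * _).
  apply: eq_bigr => A _; transitivity ((`|w A| ^+ 2)^*) => //.
  by rewrite conj_Creal // rpredX // normr_real.
apply: eq_bigr => v _; transitivity ((x - w1 v)^*) => //.
by rewrite rmorphB; congr (_ - _); symmetry; apply: conj_Creal.
Qed.

Lemma mu_shift_neq0_ratio (S : {set T}) x :
  (forall u, u \in S -> 0 < 'Im (mu_shift S x / mu_shift (S :\ u) x)) ->
  mu_shift S x != 0.
Proof.
have [-> _ | [u uS] Imr_gt0] := set_0Vmem S; first by rewrite mu_shift0 oner_eq0.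
by apply: contraTneq (Imr_gt0 u uS) => ->; rewrite mul0r raddf0 ltxx.
Qed.

Lemma Im_mu_shift_ratio_gt0 x : 0 < 'Im x -> forall (S : {set T}) u, u \in S ->
  0 < 'Im (mu_shift S x / mu_shift (S :\ u) x).
Proof.
move=> Imx_gt0 S; have [n] := ubnP #|S|; elim: n S => // n IHn S.
rewrite ltnS => cardS u uS; set S' := S :\ u.
have cardS' : (#|S'| < n)%N by move: cardS; rewrite (cardsD1 u S) uS.
have S'_neq0 := mu_shift_neq0_ratio (IHn S' cardS').
rewrite (mu_shift_rec x uS) mulrBl (mulfK S'_neq0) mulr_suml.
rewrite (eq_bigr (fun v => `|w [set u; v]| ^+ 2 /
                           (mu_shift S' x / mu_shift (S' :\ v) x))); last first.
  by move=> v _; rewrite invf_div mulrA.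
apply: Im_subr_sum_div_gt0 => // [v _ | v /andP[vS euv]]; first exact: exprn_ge0.
apply: IHn cardS' _ _; rewrite !inE vS andbT.
by apply: contraTneq euv => ->; rewrite e_irr.
Qed.

Lemma mu_shift_neq0 (S : {set T}) x : 0 < 'Im x -> mu_shift S x != 0.
Proof. by move=> Imx_gt0; apply/mu_shift_neq0_ratio/Im_mu_shift_ratio_gt0. Qed.

End Matchings.

Theorem corollary3p4 (C : numClosedFieldType) (T : finType) (e : rel T)
  (e_sym : symmetric e) (e_irr : irreflexive e)
  (w : {set T} -> C) (w_nz : forall A, A \in edges e -> w A != 0)
  (w1 : T -> C) (w1_real : forall v, w1 v \is Num.real) :
  forall z : C, root (eta_w e w w1) z -> z \is Num.real.
Proof.
move=> z /eqP; rewrite (horner_eta_w e_irr) => eta_z.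
have mu_neq0 := mu_shift_neq0 e_sym e_irr w w1_real setT.
apply/Creal_ImP/eqP; apply: contraT.
rewrite real_neqr_lt ?Creal_Im ?real0 // => /orP[Imz_lt0 | Imz_gt0].
  have := mu_neq0 z^*; rewrite Im_conj oppr_gt0 mu_shift_conj // eta_z conjC0.
  by rewrite eqxx => /(_ Imz_lt0).
by have := mu_neq0 z Imz_gt0; rewrite eta_z eqxx.
Qed.
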